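(* Let $m>2$ and $k\ge3$ be integers, and let $r(m)\in(0,1)$ be the unique zero of $B_m$ in $(0,1)$. Let $c>0$ be small enough that $\ker L_{r(m)}\subset X^k_c$ is one-dimensional, and let $h_0$ span this kernel. Define $$\partial_rL_rh_0\big|_{r=r(m)}=\sum_{j\ge1}\frac{d}{dr}\Big(K_j(r)a_{j-2}+y_j(r)a_j+K_j(r)a_{j+2}\Big)\Big|_{r=r(m)}\sin(jx),$$ where $h_0=\sum_j a_j\cos(jx)$ is held fixed. Then $$\partial_rL_rh_0\big|_{r=r(m)}\notin\operatorname{Range}(L_{r(m)}).$$ In fact its $\sin(mx)$-coefficient is nonzero.
   Context: **Coefficients.** For integers $j\ge1$ and $r\in(0,1)$, let $$B_j(r)=-1-2r+2jr-r^2-\frac{(1-r)^j}{(1+r)^{j-2}},\qquad K_j(r)=-\frac{1-r}{8(1+r)^2}B_j(r),$$ $$y_1(r)=-\frac{3r+1}{4(1+r)^2},\qquad y_j(r)=\frac{B_j(r)}{4(1+r)}\ \ (j\ge2).$$ **The operator.** For $h=\sum_{j\ge1}a_j\cos(jx)$ define $$L_rh=\sum_{j\ge1}\big(K_j(r)a_{j-2}+y_j(r)a_j+K_j(r)a_{j+2}\big)\sin(jx),$$ with $a_j=0$ for $j\le0$. **Function spaces.** $X^k_c$ is the space of real $2\pi$-periodic $f=\sum_{j\ge1}a_j\cos(jx)$ extending analytically to $|\operatorname{Im}z|\le c$ with $$\sum_\pm\int|f(x\pm ic)|^2+\sum_\pm\int|\partial^kf(x\pm ic)|^2<\infty.$$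 $Y^{k}_c$ is defined in the same way with sines. *)

From Stdlib Require Import Reals Lra Lia ZArith.
Open Scope R_scope.

(* Coefficients B_j, K_j, y_j.  (1+r)^(j-2) uses an integer exponent,
   so that j = 1 gives (1+r)^(-1). *)
Definition B (j : nat) (r : R) : R :=
  -1 - 2*r + 2 * INR j * r - r^2
  - (1 - r)^j / powerRZ (1 + r) (Z.of_nat j - 2).

Definition K (j : nat) (r : R) : R :=
  - (1 - r) / (8 * (1 + r)^2) * B j r.

Definition y (j : nat) (r : R) : R :=
  match j with
  | 1%nat => - (3*r + 1) / (4 * (1 + r)^2)
  | _ => B j r / (4 * (1 + r))
  end.

(* A cosine series h = sum_{j>=1} a_j cos(jx) is represented by its
   coefficient sequence a : nat -> R; only indices j >= 1 are meaningful,
   and coef a n returns a_n with the convention a_n = 0 for n <= 0. *)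
Definition coef (a : nat -> R) (n : nat) : R :=
  match n with
  | O => 0
  | _ => a n
  end.

(* The j-th sine coefficient of L_r h (j >= 1).  For j = 1,2 the truncated
   nat subtraction j-2 gives 0, and coef a 0 = 0, matching a_j = 0 for j <= 0. *)
Definition Lcoef (r : R) (a : nat -> R) (j : nat) : R :=
  K j r * coef a (j - 2) + y j r * a j + K j r * coef a (j + 2).

(* Membership of sum_{j>=1} a_j cos(jx) in X^k_c, expressed through the
   Fourier coefficients: by Parseval, over one period
     int |f(x +- ic)|^2 = pi * sum a_j^2 cosh(2jc),
     int |d^k f(x +- ic)|^2 = pi * sum j^(2k) a_j^2 cosh(2jc),
   so the defining condition is the convergence of the series below. *)
Definition inX (k : nat) (c : R) (a : nat -> R) : Prop :=
  exists l : R,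
    Un_cv (fun N => sum_f_R0
             (fun i => let j := S i in
                       (a j)^2 * (1 + INR j ^ (2 * k)) * cosh (2 * INR j * c)) N) l.

From Stdlib Require Import Reals Lra Lia.
From Coquelicot Require Import Coquelicot.
Open Scope R_scope.

(* For j >= 2 one has K_j = -q y_j with q = (1 - r) / (2 (1 + r)) < 1/2, so the
   j-th equation of L_r h = 0 reads y_j (a_j - q (a_{j-2} + a_{j+2})) = 0, and
   B_j is strictly increasing in j.  Hence at r = r(m) only the m-th equation
   degenerates, and a kernel element, which decays, cannot attain the maximum of
   |a_j| anywhere but at j = m: there |a_{m+-2}| <= |a_m| forces
   a_m - q (a_{m-2} + a_{m+2}) <> 0.  Since L_r h_0 has m-th coefficient
   B_m(r) (a_m - q (a_{m-2} + a_{m+2})) / (4 (1 + r)), its r-derivative at r(m)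
   is B_m'(r(m)) times this nonzero factor, and B_m' > 0; whereas the m-th
   coefficient of every L_{r(m)} h vanishes. *)

Lemma B_one r : B 1 r = -2.
Proof.
  unfold B, Rdiv. change (powerRZ (1 + r) (Z.of_nat 1 - 2)) with (/ (1 + r) ^ 1).
  rewrite Rinv_inv. cbn [INR pow]. ring.
Qed.

Lemma B_pow j r : (2 <= j)%nat ->
  B j r = -1 - 2 * r + 2 * INR j * r - r ^ 2 - (1 - r) ^ j / (1 + r) ^ (j - 2).
Proof.
  intros Hj. unfold B. replace (Z.of_nat j - 2)%Z with (Z.of_nat (j - 2)) by lia.
  now rewrite <- pow_powerRZ.
Qed.

Lemma B_succ j r : 0 < 1 + r ->
  B (S j) r = B j r + 2 * r
              + 2 * r / (1 + r) * ((1 - r) ^ j / powerRZ (1 + r) (Z.of_nat j - 2)).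
Proof.
  intros Hr. unfold B.
  replace (Z.of_nat (S j) - 2)%Z with ((Z.of_nat j - 2) + 1)%Z by lia.
  rewrite powerRZ_add, S_INR by lra.
  assert (0 < powerRZ (1 + r) (Z.of_nat j - 2)) by (apply powerRZ_lt; lra).
  change (powerRZ (1 + r) 1) with ((1 + r) ^ 1). cbn [pow]. field. lra.
Qed.

Lemma B_lt_succ j r : 0 < r < 1 -> B j r < B (S j) r.
Proof.
  intros Hr. rewrite B_succ by lra.
  assert (0 < 2 * r / (1 + r)) by (apply Rdiv_lt_0_compat; lra).
  assert (0 < (1 - r) ^ j / powerRZ (1 + r) (Z.of_nat j - 2)).
  { apply Rdiv_lt_0_compat; [apply pow_lt | apply powerRZ_lt]; lra. }
  nra.
Qed.

Lemma B_strict_mono i j r : 0 < r < 1 -> (i < j)%nat -> B i r < B j r.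
Proof.
  intros Hr Hij. induction Hij as [|j Hij IH].
  - now apply B_lt_succ.
  - eapply Rlt_trans; [exact IH | now apply B_lt_succ].
Qed.

Lemma B_neq0_off_resonance m j r : 0 < r < 1 -> B m r = 0 -> j <> m -> B j r <> 0.
Proof.
  intros Hr HB Hjm. destruct (Nat.lt_gt_cases j m) as [[Hlt | Hgt] _]; [exact Hjm| |].
  - pose proof (B_strict_mono j m r Hr Hlt). lra.
  - pose proof (B_strict_mono m j r Hr Hgt). lra.
Qed.

Definition Kratio (r : R) : R := (1 - r) / (2 * (1 + r)).

Definition Lbalance (r : R) (a : nat -> R) (j : nat) : R :=
  a j - Kratio r * (coef a (j - 2) + coef a (j + 2)).

Lemma Lcoef_one r a :
  Lcoef r a 1 = ((1 - r) * a 3%nat - (1 + 3 * r) * a 1%nat) / (4 * (1 + r) ^ 2).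
Proof.
  unfold Lcoef, K, y, Rdiv. rewrite B_one.
  change (coef a (1 - 2)) with 0. change (coef a (1 + 2)) with (a 3%nat).
  rewrite !Rinv_mult. set (u := / (1 + r) ^ 2). field.
Qed.

(* No condition on r: at r = -1 both sides are 0 because x / 0 = 0, so the
   identity can be differentiated through with is_derive_ext. *)
Lemma Lcoef_B_mul j r a : (2 <= j)%nat ->
  Lcoef r a j = B j r * (Lbalance r a j / (4 * (1 + r))).
Proof.
  intros Hj. destruct j as [|[|j]]; try lia.
  unfold Lcoef, Lbalance, K, y, Kratio, Rdiv. rewrite !Rinv_mult.
  replace (/ (1 + r) ^ 2) with (/ (1 + r) * / (1 + r)) by (rewrite <- Rinv_mult; f_equal; ring).
  set (u := / (1 + r)). field.
Qed.

Lemma Lcoef_resonant_vanishes m r h : (2 <= m)%nat -> B m r = 0 -> Lcoef r h m = 0.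
Proof. intros Hm HB. rewrite Lcoef_B_mul, HB by exact Hm. ring. Qed.

Lemma Lbalance_neq0 r a j : 0 < r < 1 -> a j <> 0 ->
  Rabs (coef a (j - 2)) <= Rabs (a j) -> Rabs (coef a (j + 2)) <= Rabs (a j) ->
  Lbalance r a j <> 0.
Proof.
  intros Hr Ha Hlo Hhi. unfold Lbalance.
  assert (Hq0 : 0 < Kratio r) by (apply Rdiv_lt_0_compat; lra).
  assert (Hq : 2 * Kratio r < 1).
  { unfold Kratio. apply (Rmult_lt_reg_r (2 * (1 + r))); [lra|]. field_simplify; lra. }
  assert (Hsum : Rabs (Kratio r * (coef a (j - 2) + coef a (j + 2)))
                 <= Kratio r * (2 * Rabs (a j))).
  { rewrite Rabs_mult, Rabs_pos_eq by lra. apply Rmult_le_compat_l; [lra|].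
    eapply Rle_trans; [apply Rabs_triang | lra]. }
  apply Rabs_pos_lt in Ha.
  intros Hbal. assert (Heq : a j = Kratio r * (coef a (j - 2) + coef a (j + 2))) by lra.
  rewrite <- Heq in Hsum. nra.
Qed.

Lemma kernel_max_resonant r a i : 0 < r < 1 ->
  (forall j, (1 <= j)%nat -> Lcoef r a j = 0) ->
  (1 <= i)%nat -> a i <> 0 -> (forall j, Rabs (coef a j) <= Rabs (a i)) ->
  B i r = 0.
Proof.
  intros Hr Hker Hi Hai Hmax. destruct i as [|[|i]]; [lia| |].
  - exfalso. pose proof (Hker 1%nat (le_n 1)) as H1. rewrite Lcoef_one in H1.
    assert (Heq : (1 + 3 * r) * a 1%nat = (1 - r) * a 3%nat).
    { apply (Rmult_eq_compat_r (4 * (1 + r) ^ 2)) in H1.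
      field_simplify in H1; [lra | nra]. }
    assert (H3 : Rabs (a 3%nat) <= Rabs (a 1%nat)) by exact (Hmax 3%nat).
    apply (f_equal Rabs) in Heq.
    rewrite !Rabs_mult, (Rabs_pos_eq (1 + 3 * r)), (Rabs_pos_eq (1 - r)) in Heq by lra.
    apply Rabs_pos_lt in Hai. nra.
  - destruct (Req_dec (B (S (S i)) r) 0) as [HB | HB]; [exact HB | exfalso].
    pose proof (Hker (S (S i)) ltac:(lia)) as Hj. rewrite Lcoef_B_mul in Hj by lia.
    apply Rmult_integral in Hj as [Hj | Hj]; [contradiction|].
    apply (Lbalance_neq0 r a (S (S i)) Hr Hai (Hmax _) (Hmax _)).
    unfold Rdiv in Hj. apply Rmult_integral in Hj as [Hj | Hj]; [exact Hj|].
    exfalso. revert Hj. apply Rinv_neq_0_compat. lra.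
Qed.

Lemma cosh_ge_1 x : 1 <= cosh x.
Proof.
  unfold cosh. pose proof (exp_ineq1_le x). pose proof (exp_ineq1_le (- x)). lra.
Qed.

Lemma inX_coef_sq_lim k c a : inX k c a -> is_lim_seq (fun j => coef a j ^ 2) 0.
Proof.
  intros [l Hl].
  apply is_lim_seq_incr_1.
  apply (is_lim_seq_le_le (fun _ => 0) _
           (fun i => let j := S i in
                     a j ^ 2 * (1 + INR j ^ (2 * k)) * cosh (2 * INR j * c))).
  2: apply is_lim_seq_const.
  2: { apply ex_series_lim_0. exists l. apply is_series_Reals. exact Hl. }
  intros i. cbv zeta. cbn [coef].
  assert (Hw : 1 <= (1 + INR (S i) ^ (2 * k)) * cosh (2 * INR (S i) * c)).
  { pose proof (pow_le (INR (S i)) (2 * k) (pos_INR _)).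
    pose proof (cosh_ge_1 (2 * INR (S i) * c)). nra. }
  pose proof (pow2_ge_0 (a (S i))).
  rewrite Rmult_assoc. split; [lra|]. nra.
Qed.

Lemma finite_argmax (u : nat -> R) N :
  exists i, (i <= N)%nat /\ forall j, (j <= N)%nat -> u j <= u i.
Proof.
  induction N as [|N [i [HiN Hi]]].
  - exists 0%nat. split; [lia|]. intros j Hj. replace j with 0%nat by lia. lra.
  - destruct (Rle_dec (u (S N)) (u i)) as [Hle | Hgt].
    + exists i. split; [lia|]. intros j Hj.
      destruct (Nat.eq_dec j (S N)) as [->|]; [exact Hle | apply Hi; lia].
    + exists (S N). split; [lia|]. intros j Hj.
      destruct (Nat.eq_dec j (S N)) as [->|]; [lra|].
      pose proof (Hi j ltac:(lia)). lra.
Qed.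

Lemma lim0_attains_max (u : nat -> R) j0 :
  is_lim_seq u 0 -> 0 < u j0 -> exists i, forall j, u j <= u i.
Proof.
  intros Hu Hj0. apply is_lim_seq_spec in Hu.
  destruct (Hu (mkposreal _ Hj0)) as [N HN]. cbn in HN.
  destruct (finite_argmax u N) as [i [_ Hi]].
  assert (Htail : forall j, (N <= j)%nat -> u j < u j0).
  { intros j Hj. specialize (HN j Hj). rewrite Rminus_0_r in HN.
    eapply Rle_lt_trans; [apply Rle_abs | exact HN]. }
  assert (Hj0N : (j0 <= N)%nat).
  { destruct (Nat.le_gt_cases j0 N); [assumption|]. pose proof (Htail j0 ltac:(lia)). lra. }
  exists i. intros j. destruct (Nat.le_gt_cases j N); [auto|].
  pose proof (Htail j ltac:(lia)). pose proof (Hi j0 Hj0N). lra.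
Qed.

Lemma kernel_peaks_at_resonance m r a : 0 < r < 1 -> B m r = 0 ->
  is_lim_seq (fun j => coef a j ^ 2) 0 ->
  (exists j, (1 <= j)%nat /\ a j <> 0) ->
  (forall j, (1 <= j)%nat -> Lcoef r a j = 0) ->
  a m <> 0 /\ forall j, Rabs (coef a j) <= Rabs (a m).
Proof.
  intros Hr HB Hlim [j0 [Hj0 Haj0]] Hker.
  assert (Hpos : 0 < coef a j0 ^ 2).
  { destruct j0; [lia|]. cbn [coef]. apply pow2_gt_0. exact Haj0. }
  destruct (lim0_attains_max _ j0 Hlim Hpos) as [i Hi].
  assert (Hi1 : (1 <= i)%nat).
  { destruct i; [|lia]. pose proof (Hi j0). cbn [coef] in *. lra. }
  assert (Hmax : forall j, Rabs (coef a j) <= Rabs (a i)).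
  { intros j. destruct i; [lia|]. apply Rsqr_le_abs_0. rewrite !Rsqr_pow2. apply Hi. }
  assert (Hai : a i <> 0).
  { destruct i; [lia|]. intros Hz. pose proof (Hi j0). cbn [coef] in *.
    rewrite Hz in *. lra. }
  destruct (Nat.eq_dec i m) as [<-|Him]; [split; assumption|].
  exfalso. apply (B_neq0_off_resonance m i r Hr HB Him).
  exact (kernel_max_resonant r a i Hr Hker Hi1 Hai Hmax).
Qed.

Lemma is_derive_B n r : 0 < 1 + r ->
  is_derive (B (S (S n))) r
    (2 * INR (S n) - 2 * r + INR (S (S n)) * (1 - r) ^ S n / (1 + r) ^ n
     + INR n * (1 - r) ^ S (S n) / (1 + r) ^ S n).
Proof.
  intros Hr.
  apply (is_derive_ext
           (fun t => -1 - 2 * t + 2 * INR (S (S n)) * t - t ^ 2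
                     - (1 - t) ^ S (S n) / (1 + t) ^ n)).
  { intros t. rewrite B_pow by lia. now replace (S (S n) - 2)%nat with n by lia. }
  auto_derive; [apply pow_nonzero; lra|].
  destruct n; rewrite ?S_INR; cbn [Nat.pred pow INR]; rewrite ?Rinv_1;
    replace (1 + - r) with (1 - r) by ring.
  - field. lra.
  - field. split; [apply pow_nonzero|]; lra.
Qed.

Lemma B_derive_pos j r : (2 <= j)%nat -> 0 < r < 1 ->
  exists D, 0 < D /\ is_derive (B j) r D.
Proof.
  intros Hj Hr. destruct j as [|[|n]]; try lia.
  eexists. split; [|apply is_derive_B; lra].
  assert (1 <= INR (S n)) by (rewrite S_INR; pose proof (pos_INR n); lra).
  assert (0 < INR (S (S n)) * (1 - r) ^ S n / (1 + r) ^ n).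
  { apply Rdiv_lt_0_compat; [apply Rmult_lt_0_compat; [apply lt_0_INR; lia|]|];
      apply pow_lt; lra. }
  assert (0 <= INR n * (1 - r) ^ S (S n) / (1 + r) ^ S n).
  { apply Rmult_le_pos; [apply Rmult_le_pos; [apply pos_INR|]|];
      [apply pow_le | apply Rlt_le, Rinv_0_lt_compat, pow_lt]; lra. }
  lra.
Qed.

Lemma B_derivable j r : (1 <= j)%nat -> 0 < 1 + r -> ex_derive (B j) r.
Proof.
  intros Hj Hr. destruct j as [|[|n]]; [lia| |].
  - apply (ex_derive_ext (fun _ => -2)); [intros t; symmetry; apply B_one|].
    apply ex_derive_const.
  - eexists. now apply is_derive_B.
Qed.

Lemma Lcoef_derivable r a j : (1 <= j)%nat -> 0 < 1 + r ->
  ex_derive (fun t => Lcoef t a j) r.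
Proof.
  intros Hj Hr. assert (HB := B_derivable j r Hj Hr).
  unfold Lcoef, K, y. destruct j as [|[|j]]; [lia| |]; auto_derive; repeat split; auto; nra.
Qed.

Lemma is_derive_Lcoef_resonant m r a D : (2 <= m)%nat -> 0 < 1 + r ->
  B m r = 0 -> is_derive (B m) r D ->
  is_derive (fun t => Lcoef t a m) r (D * (Lbalance r a m / (4 * (1 + r)))).
Proof.
  intros Hm Hr HB HD.
  assert (Hg : ex_derive (fun t => Lbalance t a m / (4 * (1 + t))) r).
  { unfold Lbalance, Kratio. auto_derive. repeat split; lra. }
  apply Derive_correct in Hg.
  eapply is_derive_ext; [intros t; symmetry; apply Lcoef_B_mul, Hm|].
  replace (D * (Lbalance r a m / (4 * (1 + r))))
    with (D * (Lbalance r a m / (4 * (1 + r)))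
          + B m r * Derive (fun t => Lbalance t a m / (4 * (1 + t))) r)
    by (rewrite HB; ring).
  exact (is_derive_mult _ _ _ _ _ HD Hg Rmult_comm).
Qed.

Theorem mainTheorem10 (m k : nat) (c r0 : R) (a0 : nat -> R) :
  (2 < m)%nat -> (3 <= k)%nat ->
  (* r0 = r(m), the unique zero of B_m in (0,1) *)
  0 < r0 < 1 -> B m r0 = 0 ->
  (forall r, 0 < r < 1 -> B m r = 0 -> r = r0) ->
  0 < c ->
  (* ker L_{r0} in X^k_c is one-dimensional, spanned by h0 = sum a0_j cos(jx) *)
  inX k c a0 ->
  (exists j, (1 <= j)%nat /\ a0 j <> 0) ->
  (forall j, (1 <= j)%nat -> Lcoef r0 a0 j = 0) ->
  (forall a, inX k c a -> (forall j, (1 <= j)%nat -> Lcoef r0 a j = 0) ->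
     exists t : R, forall j, (1 <= j)%nat -> a j = t * a0 j) ->
  (* the r-derivative of the coefficients of L_r h0 exists at r0 ... *)
  (exists d : nat -> R, forall j, (1 <= j)%nat ->
     derivable_pt_lim (fun r => Lcoef r a0 j) r0 (d j)) /\
  (* ... and d = partial_r L_r h0 |_{r=r0} is not in Range(L_{r0}),
     and its sin(mx)-coefficient is nonzero *)
  (forall d : nat -> R,
     (forall j, (1 <= j)%nat -> derivable_pt_lim (fun r => Lcoef r a0 j) r0 (d j)) ->
     (~ exists h : nat -> R, inX k c h /\
          forall j, (1 <= j)%nat -> Lcoef r0 h j = d j) /\
     d m <> 0).
Proof.
  intros Hm _ Hr HB _ _ HX Hnz Hker _.
  split.
  { exists (fun j => Derive (fun r => Lcoef r a0 j) r0). intros j Hj.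
    apply is_derive_Reals, Derive_correct, Lcoef_derivable; [exact Hj | lra]. }
  intros d Hd.
  destruct (kernel_peaks_at_resonance m r0 a0 Hr HB (inX_coef_sq_lim k c a0 HX) Hnz Hker)
    as [Ham Hmax].
  assert (Hbal : Lbalance r0 a0 m <> 0) by exact (Lbalance_neq0 r0 a0 m Hr Ham (Hmax _) (Hmax _)).
  destruct (B_derive_pos m r0 ltac:(lia) Hr) as [D [HD HBD]].
  assert (Hdm : d m = D * (Lbalance r0 a0 m / (4 * (1 + r0)))).
  { apply (uniqueness_limite (fun r => Lcoef r a0 m) r0); [exact (Hd m ltac:(lia))|].
    apply is_derive_Reals, is_derive_Lcoef_resonant; [lia | lra | exact HB | exact HBD]. }
  assert (Hdm0 : d m <> 0).
  { rewrite Hdm. apply Rmult_integral_contrapositive. split; [lra|].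
    apply Rmult_integral_contrapositive. split; [exact Hbal|].
    apply Rinv_neq_0_compat. lra. }
  split; [|exact Hdm0].
  intros [h [_ Hh]]. apply Hdm0.
  rewrite <- (Hh m ltac:(lia)). apply Lcoef_resonant_vanishes; [lia | exact HB].
Qed.
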